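(* In the setting of the homogeneous all-to-all network with coupling $\varepsilon$, $(N-1)\varepsilon<1$, a neuronal differentiable partial reset $R$ and a strictly convex ($U''>0$) dcpd rise function $U$, let $2\le a_1\le N$. If $R'(\zeta)\ge1$ for all $\zeta\in[(a_1-2)\varepsilon,(a_1-1)\varepsilon]$, then an avalanche of size $a_1$ is not invariant under return (for every admissible trigger-invariant firing sequence $\mathcal{F}$ with first avalanche size $a_1$ and every $0<\Delta\phi\le1-U^{-1}(1-\varepsilon)$, $1-M_{\mathcal{F}}(1-\Delta\phi)>\Delta\phi$).
   Context: Rise function: smooth $U:[0,\infty)\to[0,\infty)$, $U'>0$, $U(0)=0$, $U(1)=1$. Partial reset: monotonically increasing $R$ with $R(0)=0$; neuronal if $0\le R(\zeta)\le\zeta$ for $\zeta\ge0$. $H_\varepsilon(\phi)=U^{-1}(U(\phi)+\varepsilon)$, $J_\varepsilon(\phi)=U^{-1}(R(U(\phi)+\varepsilon-1))$, $S_\sigma(\phi)=\phi+\sigma$, $\bigodot_{r=p}^q(S_{\sigma_r}\circ H_{\varepsilon_r}):=S_{\sigma_q}\circ H_{\varepsilon_q}\circ\cdots\circ S_{\sigma_p}\circ H_{\varepsilon_p}$. Network: $N$ units, pulse strength $\varepsilon>0$ between distinct units; phases grow at unit rate; at phase $1$ a unit fires, raising potentials $U(\phi_i)$ of the others by $\varepsilon$; units reaching potential $\ge1$ fire in the same avalanche; non-firing units get phase $H_{k\varepsilon}(\phi_i)$, firing units $J_{k'\varepsilon}(\phi_i)$ ($k$, $k'$ = number of firing units, resp.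 other than itself). Firing sequence $\mathcal{F}=((a_1,\sigma_1),\dots,(a_m,\sigma_m))$: avalanche sizes and inter-avalanche times over one period of the trigger unit of an avalanche of size $a_1$; admissible = realized by some state; trigger invariant = trigger again at phase $1$ at the end. $M_{\mathcal{F}}(\phi)=\big[\bigodot_{r=2}^m(S_{\sigma_r}\circ H_{a_r\varepsilon})\big]\circ S_{\sigma_1}\circ J_{(a_1-1)\varepsilon}(\phi)$. Invariance under return: $M_{\mathcal{F}}(U^{-1}(1-a\varepsilon))\ge U^{-1}(1-a\varepsilon)$ for all $a\in\{1,\dots,a_1-1\}$ and all admissible trigger-invariant $\mathcal{F}$ with first avalanche size $a_1$. dcpd: $\partial_\phi[H_\varepsilon(\phi+\Delta\phi)-H_\varepsilon(\phi)]\le0$ for $0\le\varepsilon\le1$, $0\le\phi\le1$, $0\le\Delta\phi\le U^{-1}(1-\varepsilon)-\phi$. *)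

From Stdlib Require Import Reals Lra Lia List ClassicalEpsilon.
Import ListNotations.
Open Scope R_scope.

(* U^{-1} on [0,oo): the nonnegative preimage (chosen by epsilon). *)
Definition Uinv (U : R -> R) (y : R) : R :=
  epsilon (inhabits 0) (fun x => 0 <= x /\ U x = y).

Definition Hf (U : R -> R) (e phi : R) : R := Uinv U (U phi + e).

Definition Jf (U Rr : R -> R) (e phi : R) : R := Uinv U (Rr (U phi + e - 1)).

Definition Sf (s phi : R) : R := phi + s.

Definition dcpd (U : R -> R) : Prop :=
  forall e phi dphi d,
    0 <= e <= 1 -> 0 <= phi <= 1 -> 0 <= dphi <= Uinv U (1 - e) - phi ->
    derivable_pt_lim (fun p => Hf U e (p + dphi) - Hf U e p) phi d ->
    d <= 0.

Definition smooth_with (U : R -> R) (DU : nat -> R -> R) : Prop :=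
  (forall x, DU 0%nat x = U x) /\
  (forall n x, derivable_pt_lim (DU n) x (DU (S n) x)).

Definition count_true (N : nat) (F : nat -> bool) : nat :=
  length (filter F (seq 0 N)).

(* Starting from the empty set, the first step yields the units at phase 1. *)
Definition aval_step (U : R -> R) (eps : R) (N : nat) (phi : nat -> R)
    (F : nat -> bool) : nat -> bool :=
  fun i => orb (F i) (if Rle_dec 1 (U (phi i) + INR (count_true N F) * eps)
                   then true else false).

(* the set of units firing in the avalanche triggered in state phi
   (the iteration stabilises after at most N+1 steps) *)
Definition aval_set (U : R -> R) (eps : R) (N : nat) (phi : nat -> R) : nat -> bool :=
  Nat.iter (S N) (aval_step U eps N phi) (fun _ => false).

Definition aval_size (U : R -> R) (eps : R) (N : nat) (phi : nat -> R) : nat :=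
  count_true N (aval_set U eps N phi).

Definition post_aval (U Rr : R -> R) (eps : R) (N : nat) (phi : nat -> R) : nat -> R :=
  fun i => if aval_set U eps N phi i
           then Jf U Rr ((INR (aval_size U eps N phi) - 1) * eps) (phi i)
           else Hf U (INR (aval_size U eps N phi) * eps) (phi i).

(* A firing sequence is a list of (avalanche size, inter-avalanche time). *)
(* admissible and trigger invariant: realised by some state psi 0 (phases in
   [0,1], trigger j at phase 1); psi r = state at the start of avalanche r;
   sigma_r = time until the next unit reaches phase 1; the trigger does not fire
   in avalanches 2..m and is at phase 1 again at the end of the period. *)
Definition adm_trigger_inv (U Rr : R -> R) (eps : R) (N : nat)
    (F : list (nat * R)) : Prop :=
  F <> [] /\
  exists (psi : nat -> nat -> R) (j : nat),
    (j < N)%nat /\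
    (forall i, (i < N)%nat -> 0 <= psi 0%nat i <= 1) /\
    psi 0%nat j = 1 /\
    (forall r, (r < length F)%nat ->
       let a := fst (nth r F (0%nat, 0)) in
       let s := snd (nth r F (0%nat, 0)) in
       a = aval_size U eps N (psi r) /\
       (forall i, (i < N)%nat -> psi (S r) i = post_aval U Rr eps N (psi r) i + s) /\
       (forall i, (i < N)%nat -> post_aval U Rr eps N (psi r) i + s <= 1) /\
       (exists i, (i < N)%nat /\ post_aval U Rr eps N (psi r) i + s = 1)) /\
    (forall r, (1 <= r < length F)%nat -> aval_set U eps N (psi r) j = false) /\
    psi (length F) j = 1.

Fixpoint Mrest (U : R -> R) (eps : R) (l : list (nat * R)) (x : R) : R :=
  match l with
  | [] => x
  | (a, s) :: l' => Mrest U eps l' (Sf s (Hf U (INR a * eps) x))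
  end.

Definition MF (U Rr : R -> R) (eps : R) (F : list (nat * R)) (phi : R) : R :=
  match F with
  | [] => phi
  | (a1, s1) :: rest => Mrest U eps rest (Sf s1 (Jf U Rr ((INR a1 - 1) * eps) phi))
  end.

(* Write gap(x, y) = U x - U y for the potential gap between two phases, and
   let phi = 1 - dphi, so that U^{-1}(1 - eps) <= phi < 1.  We compare the
   images of the trigger phase 1 and of phi under the maps composing M_F:
   - the reset J_{(a1-1)eps} does not shrink the gap, because R' >= 1 on the
     window [(a1-2)eps, (a1-1)eps] containing both reset arguments;
   - a jump H_{a eps} adds the same potential to both phases, so the gap is
     unchanged;
   - a drift S_sigma enlarges the gap, strictly when sigma > 0 (U'' > 0).
   Admissibility provides sigma_r > 0 for every r (after an avalanche all
   phases are < 1, and some unit reaches phase 1 after sigma_r), and trigger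
   invariance provides M_F(1) = 1.  Hence 1 - U(M_F phi) > 1 - U(phi), that is
   M_F(phi) < phi. *)

From Stdlib Require Import Reals Lra Lia List ClassicalEpsilon.
Import ListNotations.
Open Scope R_scope.

Lemma slope_ge (f f' : R -> R) (m a b : R) :
  a < b ->
  (forall c, a <= c <= b -> derivable_pt_lim f c (f' c)) ->
  (forall c, a < c < b -> m <= f' c) ->
  m * (b - a) <= f b - f a.
Proof.
  intros hab Hd Hm. destruct (MVT_cor2 f f' a b hab Hd) as [c [Hc Hcab]].
  rewrite Hc. apply Rmult_le_compat_r; [lra | exact (Hm c Hcab)].
Qed.

Lemma incr_of_pos_deriv (f f' : R -> R) (a b : R) :
  a < b ->
  (forall c, a <= c <= b -> derivable_pt_lim f c (f' c)) ->
  (forall c, a < c < b -> 0 < f' c) ->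
  f a < f b.
Proof.
  intros hab Hd Hp. destruct (MVT_cor2 f f' a b hab Hd) as [c [Hc Hcab]].
  pose proof (Hp c Hcab). nra.
Qed.

Lemma derivable_pt_lim_shift (f : R -> R) (x d l : R) :
  derivable_pt_lim f (x + d) l -> derivable_pt_lim (fun t => f (t + d)) x l.
Proof.
  intros H e he. destruct (H e he) as [del Hdel]. exists del. intros h hh hd.
  replace (x + h + d) with (x + d + h) by ring. exact (Hdel h hh hd).
Qed.

Lemma count_true_S (n : nat) (F : nat -> bool) :
  count_true (S n) F = (count_true n F + if F n then 1 else 0)%nat.
Proof.
  unfold count_true. rewrite seq_S, filter_app, length_app. simpl.
  destruct (F n); simpl; lia.
Qed.

Lemma count_true_le_N (N : nat) (F : nat -> bool) : (count_true N F <= N)%nat.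
Proof.
  unfold count_true. rewrite <- (length_seq N 0) at 2. apply filter_length_le.
Qed.

Lemma count_true_mono (N : nat) (F G : nat -> bool) :
  (forall i, (i < N)%nat -> F i = true -> G i = true) ->
  (count_true N F <= count_true N G)%nat.
Proof.
  induction N as [|N IH]; intros H; [unfold count_true; simpl; lia|].
  rewrite !count_true_S. specialize (IH (fun i hi => H i ltac:(lia))).
  destruct (F N) eqn:E; [rewrite (H N) by (auto; lia); lia | destruct (G N); lia].
Qed.

Lemma count_true_strict (N : nat) (F G : nat -> bool) :
  (forall i, (i < N)%nat -> F i = true -> G i = true) ->
  forall i, (i < N)%nat -> F i = false -> G i = true ->
  (count_true N F < count_true N G)%nat.
Proof.
  induction N as [|N IH]; intros H i hi Fi Gi; [lia|].
  rewrite !count_true_S. destruct (Nat.eq_dec i N) as [->|ne].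
  - rewrite Fi, Gi. pose proof (count_true_mono N F G (fun k hk => H k ltac:(lia))). lia.
  - specialize (IH (fun k hk => H k ltac:(lia)) i ltac:(lia) Fi Gi).
    destruct (F N) eqn:E; [rewrite (H N) by (auto; lia); lia | destruct (G N); lia].
Qed.

Lemma count_true_ext (N : nat) (F G : nat -> bool) :
  (forall i, (i < N)%nat -> F i = G i) -> count_true N F = count_true N G.
Proof.
  intros H. apply Nat.le_antisymm; apply count_true_mono;
    intros i hi; now rewrite (H i hi).
Qed.

(* The growth process adds at each
   stage the units whose potential reaches 1 after the pulses of the current
   set; it stabilises within N stages, which yields the threshold description
   of the firing set used later: firing units reach potential 1 with the pulses
   of the other firing units, non-firing units stay below 1 with all pulses. *)
Section Avalanche.
Variables (U : R -> R) (eps : R) (N : nat) (phi : nat -> R).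
Hypothesis eps_nonneg : 0 <= eps.

Let grow := aval_step U eps N phi.
Let stage (t : nat) := Nat.iter t grow (fun _ => false).
Let size_at (t : nat) := count_true N (stage t).

Lemma grow_spec (F : nat -> bool) (i : nat) : grow F i = true <->
  F i = true \/ 1 <= U (phi i) + INR (count_true N F) * eps.
Proof.
  unfold grow, aval_step. rewrite Bool.orb_true_iff.
  destruct (Rle_dec _ _); intuition (try discriminate; try contradiction).
Qed.

Lemma grow_incl (F : nat -> bool) (i : nat) : F i = true -> grow F i = true.
Proof. intros H. apply grow_spec. now left. Qed.

Lemma grow_below (F : nat -> bool) (i : nat) : grow F i = false ->
  U (phi i) + INR (count_true N F) * eps < 1.
Proof.
  intros H. apply Rnot_le_lt. intros Hle.
  assert (grow F i = true) by (apply grow_spec; now right). congruence.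
Qed.

Lemma grow_ext (F G : nat -> bool) : (forall i, (i < N)%nat -> F i = G i) ->
  forall i, (i < N)%nat -> grow F i = grow G i.
Proof.
  intros H i hi. unfold grow, aval_step. now rewrite (count_true_ext N F G H), (H i hi).
Qed.

Lemma size_at_mono (t : nat) : (size_at t <= size_at (S t))%nat.
Proof. apply count_true_mono. intros i _ h. exact (grow_incl _ i h). Qed.

Lemma stage_stable (t : nat) : size_at t = size_at (S t) ->
  forall i, (i < N)%nat -> stage t i = stage (S t) i.
Proof.
  intros H i hi. destruct (stage t i) eqn:E.
  - symmetry. exact (grow_incl _ i E).
  - destruct (stage (S t) i) eqn:E2; [exfalso|reflexivity].
    pose proof (count_true_strict N (stage t) (stage (S t))
      (fun k _ h => grow_incl _ k h) i hi E E2).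
    unfold size_at in H. lia.
Qed.

Lemma size_stable_forever (t : nat) : size_at t = size_at (S t) ->
  forall k, size_at (k + t) = size_at (S (k + t)).
Proof.
  intros H k. induction k as [|k IH]; [exact H|].
  apply count_true_ext. intros i hi.
  change (grow (stage (k + t)) i = grow (stage (S (k + t))) i).
  exact (grow_ext _ _ (stage_stable (k + t) IH) i hi).
Qed.

(* The counts increase strictly until they stabilise and are bounded by N. *)
Lemma size_final : size_at N = size_at (S N).
Proof.
  destruct (Nat.eq_dec (size_at N) (size_at (S N))) as [e|ne]; [exact e|exfalso].
  assert (Hgrow : forall t, (t <= N)%nat -> (size_at t < size_at (S t))%nat).
  { intros t ht. pose proof (size_at_mono t).
    destruct (Nat.eq_dec (size_at t) (size_at (S t))) as [e|]; [exfalso|lia].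
    apply ne. pose proof (size_stable_forever t e (N - t)) as Hst.
    now replace (N - t + t)%nat with N in Hst by lia. }
  assert (Hlb : forall t, (t <= S N)%nat -> (t <= size_at t)%nat).
  { induction t as [|t IH]; intros ht; [lia|].
    pose proof (Hgrow t ltac:(lia)). pose proof (IH ltac:(lia)). lia. }
  pose proof (Hlb (S N) (le_n _)). pose proof (count_true_le_N N (stage (S N))).
  unfold size_at in *. lia.
Qed.

Lemma aval_nonfire (i : nat) : (i < N)%nat -> aval_set U eps N phi i = false ->
  U (phi i) + INR (aval_size U eps N phi) * eps < 1.
Proof.
  intros hi H. pose proof (grow_below (stage N) i H) as Hlt.
  change (count_true N (stage N)) with (size_at N) in Hlt.
  rewrite size_final in Hlt. exact Hlt.
Qed.

Lemma stage_fire (t i : nat) : (i < N)%nat -> stage t i = true ->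
  1 <= U (phi i) + (INR (size_at t) - 1) * eps.
Proof.
  revert i. induction t as [|t IH]; intros i hi H; [discriminate|].
  pose proof (le_INR _ _ (size_at_mono t)) as Hm.
  destruct (stage t i) eqn:E; [pose proof (IH i hi E); nra|].
  assert (Hs : (size_at t < size_at (S t))%nat).
  { exact (count_true_strict N (stage t) (stage (S t))
      (fun k _ h => grow_incl _ k h) i hi E H). }
  assert (Hs' : INR (size_at t) + 1 <= INR (size_at (S t))).
  { rewrite <- S_INR. apply le_INR. lia. }
  destruct (proj1 (grow_spec (stage t) i) H) as [E'|Hle]; [congruence|].
  change (count_true N (stage t)) with (size_at t) in Hle. nra.
Qed.

Lemma aval_fire (i : nat) : (i < N)%nat -> aval_set U eps N phi i = true ->
  1 <= U (phi i) + (INR (aval_size U eps N phi) - 1) * eps.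
Proof. exact (stage_fire (S N) i). Qed.

Lemma phase_one_fires (j : nat) : U 1 = 1 -> phi j = 1 -> aval_set U eps N phi j = true.
Proof.
  intros U_1 Hj. apply (grow_spec (stage N)). right. rewrite Hj, U_1.
  pose proof (pos_INR (count_true N (stage N))). nra.
Qed.

End Avalanche.

Definition realizes (U Rr : R -> R) (eps : R) (N : nat) (F : list (nat * R))
    (psi : nat -> nat -> R) : Prop :=
  forall r, (r < length F)%nat ->
    let a := fst (nth r F (0%nat, 0)) in
    let s := snd (nth r F (0%nat, 0)) in
    a = aval_size U eps N (psi r) /\
    (forall i, (i < N)%nat -> psi (S r) i = post_aval U Rr eps N (psi r) i + s) /\
    (forall i, (i < N)%nat -> post_aval U Rr eps N (psi r) i + s <= 1) /\
    (exists i, (i < N)%nat /\ post_aval U Rr eps N (psi r) i + s = 1).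

Lemma trigger_orbit (U Rr : R -> R) (eps : R) (N : nat) (F : list (nat * R))
    (psi : nat -> nat -> R) (j : nat) :
  (j < N)%nat -> realizes U Rr eps N F psi ->
  (forall r, (1 <= r < length F)%nat -> aval_set U eps N (psi r) j = false) ->
  forall l k, (1 <= k)%nat -> skipn k F = l ->
  Mrest U eps l (psi k j) = psi (k + length l)%nat j.
Proof.
  intros hj Hr Hnf l. induction l as [|[a s] l IH]; intros k hk Hsk.
  - simpl. now rewrite Nat.add_0_r.
  - assert (hkl : (k < length F)%nat).
    { pose proof (length_skipn k F) as Hlen. rewrite Hsk in Hlen. simpl in Hlen. lia. }
    assert (Hn : nth k F (0%nat, 0) = (a, s)).
    { pose proof (nth_skipn k F 0 (0%nat, 0)) as Hnth.
      rewrite Hsk, Nat.add_0_r in Hnth. now symmetry. }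
    destruct (Hr k hkl) as [Ha [Hs _]]. rewrite Hn in Ha, Hs. simpl in Ha, Hs.
    assert (Hsk' : skipn (S k) F = l).
    { replace (S k) with (1 + k)%nat by lia. now rewrite <- skipn_skipn, Hsk. }
    specialize (IH (S k) ltac:(lia) Hsk').
    rewrite (Hs j hj) in IH. unfold post_aval in IH.
    rewrite (Hnf k ltac:(lia)), <- Ha in IH.
    simpl. unfold Sf. rewrite IH. f_equal. simpl. lia.
Qed.

Lemma adm_trigger_returns (U Rr : R -> R) (eps : R) (N : nat) (F : list (nat * R)) :
  U 1 = 1 -> 0 <= eps -> adm_trigger_inv U Rr eps N F -> MF U Rr eps F 1 = 1.
Proof.
  intros U_1 he [Fne [psi [j [hj [_ [Hj0 [Hr [Hnf Hjm]]]]]]]].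
  destruct F as [|[a s] rest]; [contradiction|].
  destruct (Hr 0%nat ltac:(simpl; lia)) as [Ha [Hs _]]. simpl in Ha, Hs.
  pose proof (trigger_orbit U Rr eps N _ psi j hj Hr Hnf rest 1%nat (le_n _) eq_refl) as HM.
  simpl in HM, Hjm. rewrite Hjm, (Hs j hj) in HM. unfold post_aval in HM.
  rewrite (phase_one_fires U eps N (psi 0%nat) he j U_1 Hj0), <- Ha, Hj0 in HM.
  exact HM.
Qed.

Section ConvexRise.
Variables (U : R -> R) (DU : nat -> R -> R).
Hypothesis U_smooth : smooth_with U DU.
Hypothesis U'_pos : forall x, 0 <= x -> 0 < DU 1%nat x.
Hypothesis U_0 : U 0 = 0.
Hypothesis U_1 : U 1 = 1.
Hypothesis U''_pos : forall x, 0 <= x -> 0 < DU 2%nat x.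

Lemma U_deriv (c : R) : derivable_pt_lim U c (DU 1%nat c).
Proof.
  destruct U_smooth as [H0 HD]. exact (derivable_pt_lim_ext _ _ _ _ H0 (HD 0%nat c)).
Qed.

Lemma U'_incr (a b : R) : 0 <= a -> a < b -> DU 1%nat a < DU 1%nat b.
Proof.
  intros ha hab. apply (incr_of_pos_deriv _ (DU 2%nat)); [exact hab | |].
  - intros c _. apply (proj2 U_smooth).
  - intros c hc. apply U''_pos. lra.
Qed.

Lemma U_incr (a b : R) : 0 <= a -> a < b -> U a < U b.
Proof.
  intros ha hab. apply (incr_of_pos_deriv _ (DU 1%nat)); [exact hab | |].
  - intros c _. apply U_deriv.
  - intros c hc. apply U'_pos. lra.
Qed.

Lemma U_le (a b : R) : 0 <= a -> a <= b -> U a <= U b.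
Proof.
  intros ha hab. destruct (Req_dec a b) as [->|ne]; [lra|].
  left. apply U_incr; lra.
Qed.

Lemma U_lt_rev (a b : R) : 0 <= b -> U a < U b -> a < b.
Proof.
  intros hb H. destruct (Rlt_le_dec a b) as [|hba]; [assumption|].
  pose proof (U_le b a hb hba). lra.
Qed.

Lemma U_nonneg (a : R) : 0 <= a -> 0 <= U a.
Proof. intros ha. rewrite <- U_0. exact (U_le 0 a (Rle_refl 0) ha). Qed.

Lemma U_above_tangent (x : R) : 0 <= x -> DU 1%nat 0 * x <= U x.
Proof.
  intros hx. destruct (Req_dec x 0) as [->|nz]; [rewrite U_0; lra|].
  pose proof (slope_ge U (DU 1%nat) (DU 1%nat 0) 0 x ltac:(lra) (fun c _ => U_deriv c)
    (fun c hc => Rlt_le _ _ (U'_incr 0 c (Rle_refl 0) (proj1 hc)))) as Hslope.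
  rewrite U_0 in Hslope. lra.
Qed.

(* U maps [0, oo) onto [0, oo), so U^{-1} is a genuine inverse there. *)
Lemma U_onto (v : R) : 0 <= v -> exists x, 0 <= x /\ U x = v.
Proof.
  intros hv. pose proof (U'_pos 0 (Rle_refl 0)) as hd.
  set (b := v / DU 1%nat 0 + 1).
  assert (hb : 0 < b).
  { assert (0 <= v / DU 1%nat 0).
    { apply Rmult_le_pos; [lra | left; apply Rinv_0_lt_compat; lra]. }
    unfold b; lra. }
  assert (hUb : v < U b).
  { pose proof (U_above_tangent b (Rlt_le _ _ hb)).
    assert (DU 1%nat 0 * b = v + DU 1%nat 0) by (unfold b; field; lra). lra. }
  destruct (Req_dec v 0) as [->|nz]; [exists 0; split; lra|].
  assert (hc : continuity (fun x => U x - v)).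
  { intro x. apply continuity_pt_minus; [|apply continuity_pt_const; now intros].
    apply derivable_continuous_pt. exists (DU 1%nat x). apply U_deriv. }
  destruct (IVT (fun x => U x - v) 0 b hc hb) as [z [Hz Hz2]]; simpl; [lra|lra|].
  exists z. simpl in Hz2. split; lra.
Qed.

Lemma Uinv_spec (v : R) : 0 <= v -> 0 <= Uinv U v /\ U (Uinv U v) = v.
Proof. intros hv. unfold Uinv. apply epsilon_spec. exact (U_onto v hv). Qed.

Lemma Uinv_lt_1 (v : R) : 0 <= v < 1 -> Uinv U v < 1.
Proof.
  intros hv. destruct (Uinv_spec v ltac:(lra)) as [_ HU].
  apply U_lt_rev; lra.
Qed.

(* A drift s > 0 strictly enlarges the potential gap (strict convexity). *)
Lemma drift_enlarges_gap (x y s : R) : 0 <= y -> y < x -> 0 < s ->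
  U x - U y < U (x + s) - U (y + s).
Proof.
  intros hy hyx hs. set (d := x - y).
  assert (Hincr : U (y + d) - U y < U (y + s + d) - U (y + s)).
  { apply (incr_of_pos_deriv (fun t => U (t + d) - U t)
      (fun t => DU 1%nat (t + d) - DU 1%nat t)); [lra | |].
    - intros c _. apply derivable_pt_lim_minus; [apply derivable_pt_lim_shift|]; apply U_deriv.
    - intros c hc. apply Rlt_0_minus, U'_incr; unfold d; lra. }
  replace (y + d) with x in Hincr by (unfold d; ring).
  replace (y + s + d) with (x + s) in Hincr by (unfold d; ring). exact Hincr.
Qed.

Lemma drift_keeps_gap (x y s : R) : 0 <= y -> y < x -> 0 <= s ->
  U x - U y <= U (x + s) - U (y + s).
Proof.
  intros hy hyx hs. destruct (Req_dec s 0) as [->|nz]; [rewrite !Rplus_0_r; lra|].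
  left. apply drift_enlarges_gap; lra.
Qed.

(* A jump H_e raises both potentials by e: order and gap are preserved. *)
Lemma jump_keeps_gap (e x y : R) : 0 <= e -> 0 <= y -> y < x ->
  0 <= Hf U e y /\ Hf U e y < Hf U e x /\ U (Hf U e x) - U (Hf U e y) = U x - U y.
Proof.
  intros he hy hyx. unfold Hf.
  pose proof (U_nonneg y hy). pose proof (U_incr y x hy hyx).
  destruct (Uinv_spec (U y + e)) as [Hy0 HUy]; [lra|].
  destruct (Uinv_spec (U x + e)) as [Hx0 HUx]; [lra|].
  split; [exact Hy0|split; [apply U_lt_rev; lra | lra]].
Qed.

Lemma orbit_keeps_gap (eps : R) (l : list (nat * R)) : 0 <= eps ->
  (forall p, In p l -> 0 <= snd p) -> forall x y, 0 <= y -> y < x ->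
  0 <= Mrest U eps l y /\ Mrest U eps l y < Mrest U eps l x /\
  U x - U y <= U (Mrest U eps l x) - U (Mrest U eps l y).
Proof.
  intros he. induction l as [|[a s] l IH]; intros Hl x y hy hyx; simpl; [lra|].
  assert (hs : 0 <= s) by exact (Hl (a, s) (or_introl eq_refl)).
  assert (ha : 0 <= INR a * eps) by (apply Rmult_le_pos; [apply pos_INR | exact he]).
  destruct (jump_keeps_gap _ x y ha hy hyx) as [Hy0 [Hlt Hgap]].
  pose proof (drift_keeps_gap _ _ s Hy0 Hlt hs).
  unfold Sf. destruct (IH (fun p hp => Hl p (or_intror hp))
    (Hf U (INR a * eps) x + s) (Hf U (INR a * eps) y + s)) as [? [? ?]]; lra.
Qed.

(* The reset J of the first avalanche does not shrink the gap between the
   trigger (phase 1) and a unit at phase phi >= U^{-1}(1 - eps): both reset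
   arguments lie in the window where R' >= 1. *)
Lemma reset_keeps_gap (Rr dR : R -> R) (eps : R) (a1 : nat) (phi : R) :
  0 < eps <= 1 -> (2 <= a1)%nat ->
  (forall z, derivable_pt_lim Rr z (dR z)) ->
  (forall z, 0 <= z -> 0 <= Rr z <= z) ->
  (forall z, (INR a1 - 2) * eps <= z <= (INR a1 - 1) * eps -> 1 <= dR z) ->
  Uinv U (1 - eps) <= phi -> phi < 1 ->
  0 <= Jf U Rr ((INR a1 - 1) * eps) phi /\
  Jf U Rr ((INR a1 - 1) * eps) phi < Jf U Rr ((INR a1 - 1) * eps) 1 /\
  U 1 - U phi <= U (Jf U Rr ((INR a1 - 1) * eps) 1) - U (Jf U Rr ((INR a1 - 1) * eps) phi).
Proof.
  intros he ha1 Hd Hneur HdR hphi1 hphi2.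
  destruct (Uinv_spec (1 - eps)) as [Hq0 HUq]; [lra|].
  pose proof (U_le _ _ Hq0 hphi1). pose proof (U_incr phi 1 ltac:(lra) hphi2).
  assert (ha : 2 <= INR a1) by exact (le_INR 2 a1 ha1).
  unfold Jf. set (zx := U 1 + (INR a1 - 1) * eps - 1).
  set (zy := U phi + (INR a1 - 1) * eps - 1).
  assert (hzy : (INR a1 - 2) * eps <= zy) by (unfold zy; lra).
  assert (hzx : zx = (INR a1 - 1) * eps) by (unfold zx; rewrite U_1; ring).
  assert (hzyx : zy < zx) by (unfold zx, zy; lra).
  assert (Hslope : 1 * (zx - zy) <= Rr zx - Rr zy).
  { apply (slope_ge Rr dR); [exact hzyx | intros; apply Hd |].
    intros c hc. apply HdR. lra. }
  destruct (Hneur zy) as [Ry _]; [nra|].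
  destruct (Uinv_spec (Rr zy)) as [Jy0 HUJy]; [exact Ry|].
  destruct (Uinv_spec (Rr zx)) as [Jx0 HUJx]; [lra|].
  split; [exact Jy0|split; [apply U_lt_rev; lra|]].
  unfold zx, zy in *. lra.
Qed.

Lemma return_map_decreases (Rr dR : R -> R) (eps : R) (a1 : nat) (s1 : R)
    (rest : list (nat * R)) (phi : R) :
  0 < eps <= 1 -> (2 <= a1)%nat ->
  (forall z, derivable_pt_lim Rr z (dR z)) ->
  (forall z, 0 <= z -> 0 <= Rr z <= z) ->
  (forall z, (INR a1 - 2) * eps <= z <= (INR a1 - 1) * eps -> 1 <= dR z) ->
  (forall p, In p ((a1, s1) :: rest) -> 0 < snd p) ->
  MF U Rr eps ((a1, s1) :: rest) 1 = 1 ->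
  Uinv U (1 - eps) <= phi -> phi < 1 ->
  MF U Rr eps ((a1, s1) :: rest) phi < phi.
Proof.
  intros he ha1 Hd Hneur HdR Hpos HM1 hphi1 hphi2.
  destruct (reset_keeps_gap Rr dR eps a1 phi he ha1 Hd Hneur HdR hphi1 hphi2)
    as [Jy0 [Jlt Jgap]].
  assert (hs1 : 0 < s1) by exact (Hpos _ (or_introl eq_refl)).
  pose proof (drift_enlarges_gap _ _ s1 Jy0 Jlt hs1) as Sgap.
  destruct (orbit_keeps_gap eps rest ltac:(lra)
    (fun p hp => Rlt_le _ _ (Hpos p (or_intror hp)))
    (Sf s1 (Jf U Rr ((INR a1 - 1) * eps) 1)) (Sf s1 (Jf U Rr ((INR a1 - 1) * eps) phi)))
    as [_ [_ Mgap]]; [unfold Sf; lra | unfold Sf; lra|].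
  unfold MF in HM1 |- *. rewrite HM1 in Mgap. unfold Sf in *.
  destruct (Uinv_spec (1 - eps)) as [Hq0 _]; [lra|].
  apply U_lt_rev; lra.
Qed.

Section Network.
Variables (Rr : R -> R) (eps : R) (N : nat).
Hypothesis eps_pos : 0 < eps.
Hypothesis coupling : (INR N - 1) * eps < 1.
Hypothesis Rr_neuronal : forall z, 0 <= z -> 0 <= Rr z <= z.

Lemma post_aval_range (phi : nat -> R) :
  (forall i, (i < N)%nat -> 0 <= phi i <= 1) ->
  forall i, (i < N)%nat -> 0 <= post_aval U Rr eps N phi i < 1.
Proof.
  intros Hphi i hi. unfold post_aval.
  pose proof (le_INR _ _ (count_true_le_N N (aval_set U eps N phi))) as hk.
  fold (aval_size U eps N phi) in hk. pose proof (pos_INR (aval_size U eps N phi)).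
  destruct (Hphi i hi) as [p0 p1].
  pose proof (U_le _ _ p0 p1). pose proof (U_nonneg _ p0).
  destruct (aval_set U eps N phi i) eqn:E.
  - pose proof (aval_fire U eps N phi (Rlt_le _ _ eps_pos) i hi E).
    unfold Jf. set (z := U (phi i) + (INR (aval_size U eps N phi) - 1) * eps - 1).
    destruct (Rr_neuronal z) as [Rz0 Rz]; [unfold z; lra|].
    split; [apply Uinv_spec; lra | apply Uinv_lt_1; split; [lra | unfold z in *; nra]].
  - pose proof (aval_nonfire U eps N phi i hi E). unfold Hf.
    assert (0 <= INR (aval_size U eps N phi) * eps) by (apply Rmult_le_pos; lra).
    split; [apply Uinv_spec; lra | apply Uinv_lt_1; lra].
Qed.

Lemma realized_times_pos (F : list (nat * R)) (psi : nat -> nat -> R) :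
  realizes U Rr eps N F psi ->
  (forall i, (i < N)%nat -> 0 <= psi 0%nat i <= 1) ->
  forall r, (r < length F)%nat ->
  (forall i, (i < N)%nat -> 0 <= psi r i <= 1) /\ 0 < snd (nth r F (0%nat, 0)).
Proof.
  intros Hr H0. induction r as [|r IH]; intros hr.
  - split; [exact H0|].
    destruct (Hr 0%nat hr) as [_ [_ [_ [i0 [hi0 Heq]]]]].
    pose proof (post_aval_range _ H0 i0 hi0). simpl in Heq. lra.
  - destruct (IH ltac:(lia)) as [Hb Hs0].
    destruct (Hr r ltac:(lia)) as [_ [Hs [Hle _]]]. simpl in Hs, Hle.
    assert (Hb' : forall i, (i < N)%nat -> 0 <= psi (S r) i <= 1).
    { intros i hi. rewrite (Hs i hi).
      pose proof (post_aval_range _ Hb i hi). pose proof (Hle i hi). lra. }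
    split; [exact Hb'|].
    destruct (Hr (S r) hr) as [_ [_ [_ [i0 [hi0 Heq]]]]].
    pose proof (post_aval_range _ Hb' i0 hi0). simpl in Heq. lra.
Qed.

Lemma adm_times_pos (F : list (nat * R)) :
  adm_trigger_inv U Rr eps N F -> forall p, In p F -> 0 < snd p.
Proof.
  intros [_ [psi [j [_ [H0 [_ [Hr _]]]]]]] p hp.
  destruct (In_nth F p (0%nat, 0) hp) as [r [hr <-]].
  exact (proj2 (realized_times_pos F psi Hr H0 r hr)).
Qed.

End Network.
End ConvexRise.

Theorem mainTheorem8 :
  forall (N : nat) (eps : R) (U : R -> R) (DU : nat -> R -> R)
         (Rr : R -> R) (dR : R -> R) (a1 : nat),
    (* coupling *)
    0 < eps -> (INR N - 1) * eps < 1 ->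
    (* rise function: smooth, U' > 0, U(0)=0, U(1)=1, strictly convex, dcpd *)
    smooth_with U DU ->
    (forall x, 0 <= x -> 0 < DU 1%nat x) ->
    U 0 = 0 -> U 1 = 1 ->
    (forall x, 0 <= x -> 0 < DU 2%nat x) ->
    dcpd U ->
    (* neuronal differentiable partial reset *)
    (forall z, derivable_pt_lim Rr z (dR z)) ->
    Rr 0 = 0 ->
    (forall z1 z2, 0 <= z1 -> z1 <= z2 -> Rr z1 <= Rr z2) ->
    (forall z, 0 <= z -> 0 <= Rr z <= z) ->
    (2 <= a1 <= N)%nat ->
    (forall z, (INR a1 - 2) * eps <= z <= (INR a1 - 1) * eps -> 1 <= dR z) ->
    forall (F : list (nat * R)),
      adm_trigger_inv U Rr eps N F ->
      fst (nth 0 F (0%nat, 0)) = a1 ->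
      forall dphi, 0 < dphi <= 1 - Uinv U (1 - eps) ->
        1 - MF U Rr eps F (1 - dphi) > dphi.
Proof.
  intros N eps U DU Rr dR a1 he hN Hs HD1 HU0 HU1 HD2 _ Hd _ _ Hneur ha HdR
    F Hadm Hfst dphi hdphi.
  assert (he1 : eps <= 1).
  { pose proof (le_INR 2 N ltac:(lia)) as HN2. simpl in HN2. nra. }
  pose proof (adm_times_pos U DU Hs HD1 HU0 HU1 HD2 Rr eps N he hN Hneur F Hadm) as Hpos.
  pose proof (adm_trigger_returns U Rr eps N F HU1 (Rlt_le _ _ he) Hadm) as HM1.
  destruct F as [|[a s] rest]; [destruct Hadm; contradiction|].
  simpl in Hfst. subst a.
  enough (MF U Rr eps ((a1, s) :: rest) (1 - dphi) < 1 - dphi) by lra.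
  apply (return_map_decreases U DU Hs HD1 HU0 HU1 HD2 Rr dR eps a1 s rest);
    (lia || lra || assumption).
Qed.
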